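(* Let $A\in\mathbb F^{n\times n}$ be Lyapunov regular and $B\in\{A\}''_{\mathbb F}$. Then the matricization $L_{A,B}\in\mathbb F^{n^2\times n^2}$ of $\mathcal L_{A,B}$ belongs to $\overline{\{A^*\}''_{\mathbb F}}\otimes\{A^*\}''_{\mathbb F}$ (the span of Kronecker products $\bar X\otimes Y$ with $X,Y\in\{A^*\}''_{\mathbb F}$).
   Context: $\mathbb F=\mathbb R$ or $\mathbb C$; $Y^*$ is conjugate transpose; $\bar X$ is entrywise complex conjugate. $A$ is Lyapunov regular if its eigenvalues satisfy $\lambda_i+\bar\lambda_j\ne0$ for all $i,j$. $\mathcal L_Y(X)=XY+Y^*X$, and $\mathcal L_{A,B}=\mathcal L_B\circ\mathcal L_A^{-1}$. $\{A\}''_{\mathbb F}$ is the bicommutant of $A$ in $\mathbb F^{n\times n}$. The matricization of a linear map $\mathcal L:\mathbb F^{q\times q}\to\mathbb F^{n\times n}$ is the matrix $L\in\mathbb F^{n^2\times q^2}$ with $L\,\mathrm{vec}(V)=\mathrm{vec}(\mathcal L(V))$, where $\mathrm{vec}$ stacks columns. *)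

From HB Require Import structures.
From mathcomp Require Import all_boot all_order all_algebra.
Set Implicit Arguments. Unset Strict Implicit. Unset Printing Implicit Defensive.
Import Order.TTheory GRing.Theory Num.Theory.
Local Open Scope ring_scope.

(* The paper's F is either C itself (realcase = false) or the
   real subfield R = Num.real of C (realcase = true). *)
Section Defs.
Variable C : numClosedFieldType.

Definition inF (realcase : bool) (x : C) : bool := realcase ==> (x \is Num.real).

Definition mxF (realcase : bool) m n (X : 'M[C]_(m, n)) : Prop :=
  forall i j, inF realcase (X i j).

Definition conjmx m n (X : 'M[C]_(m, n)) : 'M[C]_(m, n) := map_mx Num.conj X.

Definition adjmx n (Y : 'M[C]_n) : 'M[C]_n := (conjmx Y)^T.

Definition bicomm (realcase : bool) n (A : 'M[C]_n) (X : 'M[C]_n) : Prop :=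
  mxF realcase X /\
  forall Y : 'M[C]_n, mxF realcase Y -> A *m Y = Y *m A -> X *m Y = Y *m X.

Definition lyap_regular n (A : 'M[C]_n) : Prop :=
  forall a b : C, eigenvalue A a -> eigenvalue A b -> a + b^* != 0.

Definition lyap n (Y : 'M[C]_n) (X : 'M[C]_n) : 'M[C]_n := X *m Y + adjmx Y *m X.

Definition lyap_inv n (A : 'M[C]_n) (V : 'M[C]_n) : 'M[C]_n :=
  vec_mx (mxvec V *m invmx (lin_mx (lyap A))).

Definition lyapAB n (A B : 'M[C]_n) (V : 'M[C]_n) : 'M[C]_n :=
  lyap B (lyap_inv A V).

Lemma div_sq_lt n (r : 'I_(n * n)) : (r %/ n < n)%N.
Proof.
case: n r => [|n] [r /= Hr]; first by rewrite muln0 in Hr.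
by rewrite ltn_divLR.
Qed.

Lemma mod_sq_lt n (r : 'I_(n * n)) : (r %% n < n)%N.
Proof.
case: n r => [|n] [r /= Hr]; first by rewrite muln0 in Hr.
by rewrite ltn_pmod.
Qed.

Definition idx_q n (r : 'I_(n * n)) : 'I_n := Ordinal (div_sq_lt r).
Definition idx_s n (r : 'I_(n * n)) : 'I_n := Ordinal (mod_sq_lt r).

(* vec: column stacking; entry (j*n + i) of vec V is V i j *)
Definition vec n (V : 'M[C]_n) : 'cV[C]_(n * n) :=
  \col_r V (idx_s r) (idx_q r).

Definition kron n (X Y : 'M[C]_n) : 'M[C]_(n * n) :=
  \matrix_(r, c) (X (idx_q r) (idx_q c) * Y (idx_s r) (idx_s c)).

Definition matricization_AB (realcase : bool) n (A B : 'M[C]_n)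
    (L : 'M[C]_(n * n)) : Prop :=
  mxF realcase L /\
  forall V : 'M[C]_n, mxF realcase V -> L *m vec V = vec (lyapAB A B V).

(* L is in  conj({S}''_F) (x) {S}''_F  =  F-span of { \bar X (x) Y : X, Y in {S}''_F } *)
Definition in_conj_tensor_bicomm (realcase : bool) n (S : 'M[C]_n)
    (L : 'M[C]_(n * n)) : Prop :=
  exists (k : nat) (c : 'I_k -> C) (X Y : 'I_k -> 'M[C]_n),
    (forall i, inF realcase (c i)) /\
    (forall i, bicomm realcase S (X i)) /\
    (forall i, bicomm realcase S (Y i)) /\
    L = \sum_(i < k) c i *: kron (conjmx (X i)) (Y i).

End Defs.

From Pilot Require Import Defs.
From HB Require Import structures.
From mathcomp Require Import all_boot all_order all_algebra.
From mathcomp Require Import zify ring.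
Set Implicit Arguments. Unset Strict Implicit. Unset Printing Implicit Defensive.
Import Order.TTheory GRing.Theory Num.Theory.
Local Open Scope ring_scope.

(* Under vec, L_Y becomes the matrix lyap_mx Y = conj(Y^* ) (x) 1 + 1 (x) Y^*, so
   L = lyap_mx B * (lyap_mx A)^-1; Lyapunov regularity makes lyap_mx A invertible,
   since L_A X = 0 is the Sylvester equation X A = (-A^* ) X and A, -A^* share no
   eigenvalue. As A^* and B^* lie in {A^*}'', both factors lie in the set
   conj({A^*}'') (x) {A^*}''. Because (X (x) Y)(X' (x) Y') = XX' (x) YY', that set
   is an F-algebra, and by Cayley-Hamilton it contains the inverse of each of its
   invertible F-matrices, a polynomial in it with F-coefficients. *)

(* mxpoly exports an unrelated conjmx (conjugation by a matrix). *)
Local Notation conjmx := Defs.conjmx.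

Section EntriesInF.
Variables (C : numClosedFieldType) (rc : bool).
Implicit Types x y : C.

Lemma inF_conj x : inF rc x <-> (rc -> x^* = x).
Proof.
rewrite /inF; case: rc => /=; last by split.
by rewrite CrealE; split => [/eqP|->].
Qed.

Lemma inF0 : inF rc (0 : C). Proof. by case: rc; rewrite /inF ?real0. Qed.
Lemma inF1 : inF rc (1 : C). Proof. by case: rc; rewrite /inF ?real1. Qed.

Lemma inFN x : inF rc x -> inF rc (- x).
Proof. by rewrite /inF; case: rc => //=; rewrite realN. Qed.

Lemma inFM x y : inF rc x -> inF rc y -> inF rc (x * y).
Proof. by rewrite /inF; case: rc => //=; exact: realM. Qed.

Lemma inFV x : inF rc x -> inF rc x^-1.
Proof. by rewrite /inF; case: rc => //=; rewrite realV. Qed.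

Lemma conjmxK m n : involutive (@conjmx C m n).
Proof. by move=> X; apply/matrixP => i j; rewrite !mxE conjCK. Qed.

Lemma conjmxD m n (X Y : 'M[C]_(m, n)) : conjmx (X + Y) = conjmx X + conjmx Y.
Proof. exact: map_mxD. Qed.

Lemma conjmxM m n p (X : 'M[C]_(m, n)) (Y : 'M[C]_(n, p)) :
  conjmx (X *m Y) = conjmx X *m conjmx Y.
Proof. exact: map_mxM. Qed.

Lemma conjmx1 n : conjmx (1%:M : 'M[C]_n) = 1%:M.
Proof. exact: map_mx1. Qed.

Lemma conjmx_tr m n (X : 'M[C]_(m, n)) : conjmx X^T = (conjmx X)^T.
Proof. by apply/matrixP => i j; rewrite !mxE. Qed.

Lemma adjmxM n (X Y : 'M[C]_n) : adjmx (X *m Y) = adjmx Y *m adjmx X.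
Proof. by rewrite /adjmx conjmxM trmx_mul. Qed.

Lemma adjmxK n : involutive (@adjmx C n).
Proof. by move=> X; rewrite /adjmx conjmx_tr conjmxK trmxK. Qed.

Lemma mxF_conj m n (X : 'M[C]_(m, n)) : mxF rc X <-> (rc -> conjmx X = X).
Proof.
split => [FX r|FX i j]; first by apply/matrixP => i j; rewrite mxE; apply: (inF_conj _).1.
by apply/inF_conj => r; rewrite -{2}(FX r) mxE.
Qed.

Lemma mxFD m n (X Y : 'M[C]_(m, n)) : mxF rc X -> mxF rc Y -> mxF rc (X + Y).
Proof. by move=> /mxF_conj FX /mxF_conj FY; apply/mxF_conj => r; rewrite conjmxD FX ?FY. Qed.

Lemma mxFM m n p (X : 'M[C]_(m, n)) (Y : 'M[C]_(n, p)) :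
  mxF rc X -> mxF rc Y -> mxF rc (X *m Y).
Proof. by move=> /mxF_conj FX /mxF_conj FY; apply/mxF_conj => r; rewrite conjmxM FX ?FY. Qed.

Lemma mxF1 n : mxF rc (1%:M : 'M[C]_n).
Proof. by apply/mxF_conj => _; rewrite conjmx1. Qed.

Lemma mxF_conjmx m n (X : 'M[C]_(m, n)) : mxF rc X -> mxF rc (conjmx X).
Proof. by move=> /mxF_conj FX; apply/mxF_conj => r; rewrite conjmxK FX. Qed.

Lemma mxF_adjmx n (X : 'M[C]_n) : mxF rc X -> mxF rc (adjmx X).
Proof. by move=> /mxF_conj FX; apply/mxF_conj => r; rewrite /adjmx conjmx_tr conjmxK FX. Qed.

Lemma mxF_kron n (X Y : 'M[C]_n) : mxF rc X -> mxF rc Y -> mxF rc (kron X Y).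
Proof. by move=> FX FY i j; rewrite mxE; apply: inFM. Qed.

Lemma mxF_char_poly n (M : 'M[C]_n) i : mxF rc M -> inF rc (char_poly M)`_i.
Proof.
move=> /mxF_conj FM; apply/inF_conj => r.
by rewrite -coef_map map_char_poly -[map_mx _ _]/(conjmx M) FM.
Qed.

Lemma bicomm1 n (S : 'M[C]_n) : bicomm rc S 1%:M.
Proof. by split=> [|Z _ _]; [exact: mxF1 | rewrite mul1mx mulmx1]. Qed.

Lemma bicomm_refl n (S : 'M[C]_n) : mxF rc S -> bicomm rc S S.
Proof. by move=> FS; split => // Z _ ->. Qed.

Lemma bicommM n (S X Y : 'M[C]_n) :
  bicomm rc S X -> bicomm rc S Y -> bicomm rc S (X *m Y).
Proof.
move=> [FX cX] [FY cY]; split=> [|Z FZ cSZ]; first exact: mxFM.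
by rewrite -mulmxA cY // !mulmxA cX.
Qed.

Lemma bicomm_adjmx n (S X : 'M[C]_n) :
  bicomm rc S X -> bicomm rc (adjmx S) (adjmx X).
Proof.
move=> [FX cX]; split=> [|Z FZ cSZ]; first exact: mxF_adjmx.
have cSadjZ : S *m adjmx Z = adjmx Z *m S.
  by rewrite -[S]adjmxK -!adjmxM cSZ.
by apply: (can_inj (@adjmxK n)); rewrite !adjmxM adjmxK cX //; exact: mxF_adjmx.
Qed.

End EntriesInF.

Section KroneckerVec.
Variables (C : numClosedFieldType) (n : nat).

Lemma pair_idx_lt (a b : 'I_n) : (a * n + b < n * n)%N.
Proof. have := ltn_ord a; have := ltn_ord b; nia. Qed.

Definition pair_idx (a b : 'I_n) : 'I_(n * n) := Ordinal (pair_idx_lt a b).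

Lemma idx_q_pair a b : idx_q (pair_idx a b) = a.
Proof.
apply: val_inj => /=; rewrite divnMDl ?divn_small ?addn0 //.
by case: n a b => [[]|].
Qed.

Lemma idx_s_pair a b : idx_s (pair_idx a b) = b.
Proof. by apply: val_inj => /=; rewrite modnMDl modn_small. Qed.

Lemma pair_idx_qs (t : 'I_(n * n)) : pair_idx (idx_q t) (idx_s t) = t.
Proof. by apply: val_inj => /=; rewrite -divn_eq. Qed.

Lemma big_pair_idx (F : 'I_(n * n) -> C) :
  \sum_(t < n * n) F t = \sum_(a < n) \sum_(b < n) F (pair_idx a b).
Proof.
rewrite pair_big /= (reindex (fun p : 'I_n * 'I_n => pair_idx p.1 p.2)) //.
exists (fun t => (idx_q t, idx_s t)) => [[a b] _|t _] /=.
  by rewrite idx_q_pair idx_s_pair.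
by rewrite pair_idx_qs.
Qed.

Lemma eq_idx (r t : 'I_(n * n)) :
  (r == t) = (idx_q r == idx_q t) && (idx_s r == idx_s t).
Proof.
apply/eqP/andP => [->|[/eqP Eq /eqP Es]]; first by rewrite !eqxx.
by rewrite -(pair_idx_qs r) -(pair_idx_qs t) Eq Es.
Qed.

Lemma kron_mul_vec (X Y V : 'M[C]_n) : kron X Y *m vec V = vec (Y *m V *m X^T).
Proof.
apply/matrixP => r z; rewrite !mxE big_pair_idx.
apply: eq_bigr => a _; rewrite !mxE big_distrl /=; apply: eq_bigr => b _.
by rewrite !mxE idx_q_pair idx_s_pair; ring.
Qed.

Lemma kron_mulmx (X Y X' Y' : 'M[C]_n) :
  kron X Y *m kron X' Y' = kron (X *m X') (Y *m Y').
Proof.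
apply/matrixP => r z; rewrite !mxE big_pair_idx big_distrl /=.
apply: eq_bigr => a _; rewrite big_distrr /=; apply: eq_bigr => b _.
by rewrite !mxE idx_q_pair idx_s_pair; ring.
Qed.

Lemma kron1 : kron (1%:M : 'M[C]_n) 1%:M = 1%:M.
Proof.
apply/matrixP => r t; rewrite !mxE eq_idx.
by case: (idx_q r == _); case: (idx_s r == _); rewrite ?mulr1 ?mulr0.
Qed.

Lemma vec0 : vec (0 : 'M[C]_n) = 0.
Proof. by apply/matrixP => i j; rewrite !mxE. Qed.

Lemma vecD (V W : 'M[C]_n) : vec (V + W) = vec V + vec W.
Proof. by apply/matrixP => i j; rewrite !mxE. Qed.

Lemma vec_delta (a b : 'I_n) : vec (delta_mx a b : 'M[C]_n) = delta_mx (pair_idx b a) 0.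
Proof.
apply/matrixP => r z; rewrite !mxE ord1 eqxx andbT eq_sym eq_idx.
by rewrite idx_q_pair idx_s_pair andbC (eq_sym a).
Qed.

Definition unvec (v : 'cV[C]_(n * n)) : 'M[C]_n := \matrix_(i, j) v (pair_idx j i) 0.

Lemma unvecK : cancel unvec (@vec C n).
Proof. by move=> v; apply/matrixP => r z; rewrite !mxE pair_idx_qs ord1. Qed.

Lemma vec_inj : injective (@vec C n).
Proof.
move=> V W /matrixP E; apply/matrixP => i j.
by have := E (pair_idx j i) 0; rewrite !mxE idx_q_pair idx_s_pair.
Qed.

Lemma eq_mx_vec rc (M N : 'M[C]_(n * n)) :
  (forall V, mxF rc V -> M *m vec V = N *m vec V) -> M = N.
Proof.
move=> E; apply/matrixP => i j.
have Fdelta : mxF rc (delta_mx (idx_s j) (idx_q j) : 'M[C]_n).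
  by move=> k l; rewrite mxE; case: (_ && _); [exact: inF1 | exact: inF0].
move: (E _ Fdelta); rewrite vec_delta pair_idx_qs -!colE.
by move=> /matrixP /(_ i 0); rewrite !mxE.
Qed.

End KroneckerVec.

Lemma horner_mx_coef (R : comNzRingType) n (M : 'M[R]_n.+1) (p : {poly R}) :
  horner_mx M p = \sum_(i < size p) p`_i *: M ^+ i.
Proof.
rewrite -{1}(coefK p) poly_def rmorph_sum /=; apply: eq_bigr => i _.
by rewrite linearZ /= rmorphXn /= horner_mx_X.
Qed.

Lemma invmx_char_poly (R : comUnitRingType) n (M : 'M[R]_n) :
  M \in unitmx ->
  invmx M = - ((char_poly M)`_0)^-1 *: \sum_(i < n) (char_poly M)`_i.+1 *: M ^+ i.
Proof.
case: n M => [|n] M unitM; first by rewrite !flatmx0.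
set p := char_poly M; set Q := \sum_(i < n.+1) _.
have MQ : M *m Q = - (p`_0 *: 1).
  have := Cayley_Hamilton M.
  rewrite horner_mx_coef size_char_poly big_ord_recl -/p expr0 addrC.
  move=> /eqP; rewrite addr_eq0 => /eqP <-.
  rewrite mulmx_sumr; apply: eq_bigr => i _.
  by rewrite -scalemxAr exprS mulmxE.
have unit_p0 : p`_0 \is a GRing.unit.
  by rewrite char_poly_det unitrM unitrX ?unitrN ?unitr1 // -unitmxE.
rewrite -[RHS](mulKmx unitM) -scalemxAr MQ scalerN scalerA mulNr scaleNr opprK.
by rewrite mulVr // scale1r mulmxE mulr1.
Qed.

Section FieldMatrices.
Variables (K : fieldType) (n : nat).
Implicit Types g : 'M[K]_n.

Lemma eigenvalue_det g a : eigenvalue g a = (\det (g - a%:M) == 0).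
Proof.
apply/eigenvalueP/det0P => -[v].
  by move=> vg nz_v; exists v; rewrite // mulmxBr vg mul_mx_scalar subrr.
by move=> nz_v /eqP; rewrite mulmxBr mul_mx_scalar subr_eq0 => /eqP; exists v.
Qed.

Lemma eigenvalue_tr g a : eigenvalue g^T a = eigenvalue g a.
Proof. by rewrite !eigenvalue_det -det_tr linearB /= trmxK tr_scalar_mx. Qed.

Lemma eigenvalueN g a : eigenvalue (- g) a = eigenvalue g (- a).
Proof.
apply/eigenvalueP/eigenvalueP => -[v vg nz_v]; exists v => //.
  by rewrite scaleNr -vg mulmxN opprK.
by rewrite mulmxN vg scaleNr opprK.
Qed.

Lemma unitmx_col_inj g : (forall v : 'cV_n, g *m v = 0 -> v = 0) -> g \in unitmx.
Proof.
move=> g0; rewrite -unitmx_tr -row_free_unit; apply: inj_row_free => v vg0.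
have := congr1 trmx vg0; rewrite trmx_mul trmxK trmx0 => /g0 v0.
by rewrite -[v]trmxK v0 trmx0.
Qed.

Lemma lin_mx_unit (f : {linear 'M[K]_n -> 'M[K]_n}) :
  (forall X, f X = 0 -> X = 0) -> lin_mx f \in unitmx.
Proof.
move=> f0; rewrite -row_free_unit; apply: inj_row_free => v.
rewrite mul_rV_lin => /(congr1 vec_mx); rewrite mxvecK linear0 => /f0 v0.
by rewrite -(vec_mxK v) v0 linear0.
Qed.

End FieldMatrices.

Lemma horner_mx_intertwine (R : comNzRingType) n (X A N : 'M[R]_n.+1) p :
  X *m A = N *m X -> X *m horner_mx A p = horner_mx N p *m X.
Proof.
move=> XA; elim/poly_ind: p => [|p c IHp]; first by rewrite !rmorph0 mulmx0 mul0mx.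
rewrite !rmorphD !rmorphM /= !horner_mx_X !horner_mx_C -!mulmxE.
by rewrite mulmxDr mulmxDl mulmxA IHp -!mulmxA XA scalar_mxC.
Qed.

Lemma sylvester_eq0 (K : closedFieldType) n (A N X : 'M[K]_n) :
  (forall z, eigenvalue A z -> ~~ eigenvalue N z) -> X *m A = N *m X -> X = 0.
Proof.
case: n A N X => [|n] A N X disjAN XA; first by rewrite flatmx0.
have [r Er] := closed_field_poly_normal (char_poly A).
rewrite (monicP (char_poly_monic A)) scale1r in Er.
have unit_pN : horner_mx N (char_poly A) \in unitmx.
  rewrite Er rmorph_prod big_seq /=.
  apply: (big_ind (fun M : 'M[K]_n.+1 => M \in unitmx)) => [|M1 M2|z rz].
  - exact: unitmx1.
  - by rewrite -mulmxE unitmx_mul => -> ->.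
  rewrite rmorphB /= horner_mx_X horner_mx_C unitmxE unitfE -eigenvalue_det.
  by apply: disjAN; rewrite eigenvalue_root_char Er root_prod_XsubC.
have := horner_mx_intertwine (char_poly A) XA.
rewrite Cayley_Hamilton mulmx0 => pN_X.
by rewrite -(mulKmx unit_pN X) -pN_X mulmx0.
Qed.

Definition ord_cat T k1 k2 (f : 'I_k1 -> T) (g : 'I_k2 -> T) (i : 'I_(k1 + k2)) : T :=
  match split i with inl j => f j | inr j => g j end.

Lemma ord_catP T k1 k2 (f : 'I_k1 -> T) (g : 'I_k2 -> T) (P : T -> Prop) :
  (forall i, P (f i)) -> (forall i, P (g i)) -> forall i, P (ord_cat f g i).
Proof. by move=> Pf Pg i; rewrite /ord_cat; case: (split i). Qed.

Lemma ord_cat_lshift T k1 k2 (f : 'I_k1 -> T) (g : 'I_k2 -> T) i :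
  ord_cat f g (lshift k2 i) = f i.
Proof. by rewrite /ord_cat (unsplitK (inl _ i)). Qed.

Lemma ord_cat_rshift T k1 k2 (f : 'I_k1 -> T) (g : 'I_k2 -> T) i :
  ord_cat f g (rshift k1 i) = g i.
Proof. by rewrite /ord_cat (unsplitK (inr _ i)). Qed.

Section ConjTensorBicomm.
Variables (C : numClosedFieldType) (rc : bool) (n : nat) (S : 'M[C]_n).
Local Notation T := (in_conj_tensor_bicomm rc S).

Lemma conj_tensor0 : T 0.
Proof.
exists 0%N, (fun _ => 0), (fun _ => 0), (fun _ => 0).
by rewrite big_ord0; do 3 (split; first by case).
Qed.

Lemma conj_tensor_kron X Y : bicomm rc S X -> bicomm rc S Y -> T (kron (conjmx X) Y).
Proof.
move=> bX bY; exists 1%N, (fun _ => 1), (fun _ => X), (fun _ => Y).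
by rewrite big_ord1 scale1r; split=> // _; exact: inF1.
Qed.

Lemma conj_tensor1 : T 1%:M.
Proof. by rewrite -kron1 -[X in kron X]conjmx1; apply: conj_tensor_kron; exact: bicomm1. Qed.

Lemma conj_tensorD M N : T M -> T N -> T (M + N).
Proof.
move=> [k1 [c1 [X1 [Y1 [Fc1 [bX1 [bY1 ->]]]]]]] [k2 [c2 [X2 [Y2 [Fc2 [bX2 [bY2 ->]]]]]]].
exists (k1 + k2)%N, (ord_cat c1 c2), (ord_cat X1 X2), (ord_cat Y1 Y2).
split; first exact: (ord_catP (P := inF rc)).
do 2 (split; first exact: (ord_catP (P := bicomm rc S))).
by rewrite big_split_ord; congr (_ + _); apply: eq_bigr => i _;
  rewrite ?ord_cat_lshift ?ord_cat_rshift.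
Qed.

Lemma conj_tensor_sum k (F : 'I_k -> 'M[C]_(n * n)) :
  (forall i, T (F i)) -> T (\sum_(i < k) F i).
Proof. by move=> TF; elim/big_ind: _ => //; [exact: conj_tensor0 | exact: conj_tensorD]. Qed.

Lemma conj_tensorZ a M : inF rc a -> T M -> T (a *: M).
Proof.
move=> Fa [k [c [X [Y [Fc [bX [bY ->]]]]]]].
exists k, (fun i => a * c i), X, Y; split; first by move=> i; exact: inFM.
by rewrite scaler_sumr; do 2 split=> //; apply: eq_bigr => i _; rewrite scalerA.
Qed.

Lemma conj_tensorM_kron M X Y : T M -> bicomm rc S X -> bicomm rc S Y ->
  T (M *m kron (conjmx X) Y).
Proof.
move=> [k [c [X1 [Y1 [Fc [bX1 [bY1 ->]]]]]]] bX bY.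
exists k, c, (fun i => X1 i *m X), (fun i => Y1 i *m Y).
do 3 (split; first by move=> // i; exact: bicommM).
rewrite mulmx_suml; apply: eq_bigr => i _.
by rewrite -scalemxAl kron_mulmx conjmxM.
Qed.

Lemma conj_tensorM M N : T M -> T N -> T (M *m N).
Proof.
move=> TM [k [c [X [Y [Fc [bX [bY ->]]]]]]].
rewrite mulmx_sumr; apply: conj_tensor_sum => i.
by rewrite -scalemxAr; apply: conj_tensorZ => //; exact: conj_tensorM_kron.
Qed.

Lemma conj_tensorX M i : T M -> T (M ^+ i).
Proof.
move=> TM; elim: i => [|i IHi]; first exact: conj_tensor1.
by rewrite exprS -mulmxE; exact: conj_tensorM.
Qed.

Lemma conj_tensor_invmx M : mxF rc M -> M \in unitmx -> T M -> T (invmx M).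
Proof.
move=> FM unitM TM; rewrite invmx_char_poly //.
apply: conj_tensorZ; first by apply/inFN/inFV; exact: mxF_char_poly.
apply: conj_tensor_sum => i; apply: conj_tensorZ; first exact: mxF_char_poly.
exact: conj_tensorX.
Qed.

End ConjTensorBicomm.

Section LyapunovOperator.
Variables (C : numClosedFieldType) (n : nat).
Implicit Types A X Y V : 'M[C]_n.

Lemma lyap_is_linear Y : linear (lyap Y).
Proof.
move=> a X X'; rewrite /lyap mulmxDl mulmxDr scalerDr -scalemxAl -scalemxAr.
by rewrite addrACA.
Qed.

HB.instance Definition _ Y :=
  GRing.isLinear.Build C 'M[C]_n 'M[C]_n *:%R (lyap Y) (lyap_is_linear Y).

(* conj(Y^* ) is Y^T, written so that lyap_mx Y is visibly in the tensor set. *)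
Definition lyap_mx Y : 'M[C]_(n * n) :=
  kron (conjmx (adjmx Y)) 1%:M + kron 1%:M (adjmx Y).

Lemma vec_lyap Y X : vec (lyap Y X) = lyap_mx Y *m vec X.
Proof.
rewrite /lyap /lyap_mx vecD mulmxDl !kron_mul_vec trmx1 mulmx1 mul1mx.
by rewrite /adjmx conjmx_tr conjmxK trmxK.
Qed.

Lemma eigenvalue_adjmx A a : eigenvalue (adjmx A) a = eigenvalue A a^*.
Proof. by rewrite eigenvalue_tr -[in LHS](conjCK a) eigenvalue_map. Qed.

Lemma lyap_eq0 A : lyap_regular A -> forall X, lyap A X = 0 -> X = 0.
Proof.
move=> regA X /eqP; rewrite addr_eq0 -mulNmx => /eqP XA.
apply: sylvester_eq0 XA => z Az; apply/negP.
rewrite eigenvalueN eigenvalue_adjmx => /(regA _ _ Az).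
by rewrite conjCK subrr eqxx.
Qed.

Lemma lyap_mx_unit A : lyap_regular A -> lyap_mx A \in unitmx.
Proof.
move=> regA; apply: unitmx_col_inj => v; rewrite -(unvecK v) -vec_lyap => lyap0.
have -> : unvec v = 0 by apply: (lyap_eq0 regA); apply: vec_inj; rewrite lyap0 vec0.
exact: vec0.
Qed.

Lemma lyap_invK A V : lyap_regular A -> lyap A (lyap_inv A V) = V.
Proof.
move=> regA; have unit_lin := lin_mx_unit (lyap_eq0 regA).
have := mx_rV_lin (lyap A) (mxvec V *m invmx (lin_mx (lyap A))).
by rewrite mulmxKV // mxvecK.
Qed.

Lemma vec_lyap_inv A V :
  lyap_regular A -> vec (lyap_inv A V) = invmx (lyap_mx A) *m vec V.
Proof.
by move=> regA; rewrite -{2}(lyap_invK V regA) vec_lyap mulKmx // lyap_mx_unit.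
Qed.

Lemma conj_tensor_lyap_mx rc (S Y : 'M[C]_n) :
  bicomm rc S (adjmx Y) -> in_conj_tensor_bicomm rc S (lyap_mx Y).
Proof.
move=> b_adjY; apply: conj_tensorD.
  by apply: conj_tensor_kron => //; exact: bicomm1.
by rewrite -[X in kron X]conjmx1; apply: conj_tensor_kron => //; exact: bicomm1.
Qed.

Lemma mxF_lyap_mx rc Y : mxF rc Y -> mxF rc (lyap_mx Y).
Proof.
move=> /mxF_adjmx F_adjY.
by apply: mxFD; apply: mxF_kron => //; [exact: mxF_conjmx | exact: mxF1 ..].
Qed.

End LyapunovOperator.

Theorem lemma4p1 (C : numClosedFieldType) (realcase : bool) (n : nat)
    (A B : 'M[C]_n) (L : 'M[C]_(n * n)) :
  mxF realcase A ->
  lyap_regular A ->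
  bicomm realcase A B ->
  matricization_AB realcase A B L ->
  in_conj_tensor_bicomm realcase (adjmx A) L.
Proof.
move=> FA regA bAB [_ L_vec].
have -> : L = lyap_mx B *m invmx (lyap_mx A).
  apply: (@eq_mx_vec _ _ realcase) => V FV.
  by rewrite L_vec // -mulmxA -vec_lyap_inv // -vec_lyap.
apply: conj_tensorM; first exact/conj_tensor_lyap_mx/bicomm_adjmx.
apply: conj_tensor_invmx; [exact: mxF_lyap_mx | exact: lyap_mx_unit |].
exact/conj_tensor_lyap_mx/bicomm_adjmx/bicomm_refl.
Qed.
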